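(* Let $P$ be a finite lattice and $R,R'\in\mathrm{Tr}(P)$ with $\chi^R=\chi^{R'}$. Then $\chi^{R\wedge R'}=\chi^R=\chi^{R'}$, where $R\wedge R'$ is the meet (intersection of relations) in $\mathrm{Tr}(P)$.
   Context: For a finite lattice $(P,\le)$, a transfer system on $P$ is a partial order $R$ on $P$ refining $\le$ that is closed under restriction: if $x\,R\,z$ and $y\le z$ then $(x\wedge y)\,R\,y$. $\mathrm{Tr}(P)$ is the lattice of transfer systems ordered by inclusion of relations. For $R\in\mathrm{Tr}(P)$ and $x\in P$, $\chi^R(x)$ denotes the least element of $\{y\in P: y\,R\,x\}$ (which exists). *)

From mathcomp Require Import all_boot all_order.
Set Implicit Arguments. Unset Strict Implicit. Unset Printing Implicit Defensive.
Import Order.Theory.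
Local Open Scope order_scope.

Definition transfer_system d (P : finLatticeType d) (R : rel P) : Prop :=
  [/\ reflexive R, antisymmetric R, transitive R,
      (forall x y, R x y -> x <= y) &
      (forall x y z, R x z -> y <= z -> R (x `&` y) y)].

Definition tr_meet d (P : finLatticeType d) (R R' : rel P) : rel P :=
  fun x y => R x y && R' x y.

Definition is_chi d (P : finLatticeType d) (R : rel P) (x y : P) : Prop :=
  R y x /\ (forall z, R z x -> y <= z).

(* The least element exists (as stated in the paper), so chi^R is a function;
   we define it by choice on the (finite, decidable) least-element predicate. *)
Definition chi d (P : finLatticeType d) (R : rel P) (x : P) : P :=
  odflt x [pick y | R y x && [forall z, R z x ==> (y <= z)]].

From mathcomp Require Import all_boot all_order.
Set Implicit Arguments. Unset Strict Implicit. Unset Printing Implicit Defensive.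
Import Order.Theory.
Local Open Scope order_scope.

(* For a transfer system R and x in P, the set {y | y R x} of
   R-predecessors of x contains x and is closed under binary meets (restrict
   y R x along z <= x, then compose with z R x).  In a finite lattice such a set
   has a least element, namely the meet of all its members; so chi^R(x) really
   is the least R-predecessor of x, and this characterises it uniquely.
   Now if chi^R = chi^R', then c := chi^R(x) = chi^R'(x) is both an R- and an
   R'-predecessor of x, hence an (R /\ R')-predecessor; and it lies below every
   (R /\ R')-predecessor since those are in particular R-predecessors.  Hence c
   is the least (R /\ R')-predecessor of x, i.e. chi^(R /\ R')(x) = c. *)

Lemma meet_closed_least d (P : finLatticeType d) (A : pred P) (x0 : P) :
  x0 \in A -> (forall a b, a \in A -> b \in A -> a `&` b \in A) ->
  exists2 m, m \in A & forall z, z \in A -> m <= z.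
Proof.
move=> Ax0 meetA.
have foldA s : all (mem A) s ->
    foldr Order.meet x0 s \in A /\ forall z, z \in s -> foldr Order.meet x0 s <= z.
  elim: s => [|a s IH] /=; first by [].
  move=> /andP[Aa /IH[As les]]; split; first exact: meetA.
  move=> z; rewrite in_cons => /orP[/eqP->|zs]; first exact: leIl.
  exact: le_trans (leIr _ _) (les z zs).
have [Am lem] : foldr Order.meet x0 (enum A) \in A /\
    forall z, z \in enum A -> foldr Order.meet x0 (enum A) <= z.
  by apply: foldA; apply/allP => y; rewrite mem_enum.
by exists (foldr Order.meet x0 (enum A)) => // z Az; apply: lem; rewrite mem_enum.
Qed.

Lemma chi_eq d (P : finLatticeType d) (R : rel P) (x c : P) :
  is_chi R x c -> chi R x = c.
Proof.
move=> [Rcx leastc]; rewrite /chi; case: pickP => [y /andP[Ryx /forallP ley]|none] /=.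
  by apply: le_anti; rewrite leastc //= (implyP (ley c)).
have := none c; rewrite Rcx /= => /negP[].
by apply/forallP => z; apply/implyP => /leastc.
Qed.

Section TransferSystem.

Variables (d : Order.disp_t) (P : finLatticeType d) (R : rel P).
Hypothesis TR : transfer_system R.

Lemma pred_meet_closed (x a b : P) : R a x -> R b x -> R (a `&` b) x.
Proof.
case: TR => _ _ transR leR restrR Rax Rbx.
exact: transR (restrR _ _ _ Rax (leR _ _ Rbx)) Rbx.
Qed.

Lemma chi_spec (x : P) : is_chi R x (chi R x).
Proof.
case: TR => reflR _ _ _ _.
have [m Rmx leastm] := meet_closed_least (A := fun y => R y x) (reflR x)
  (fun a b => @pred_meet_closed x a b).
by rewrite (@chi_eq _ _ R x m).
Qed.

End TransferSystem.

Theorem lemma2p11 (d : Order.disp_t) (P : finLatticeType d) (R R' : rel P) :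
  transfer_system R -> transfer_system R' ->
  chi R =1 chi R' ->
  chi (tr_meet R R') =1 chi R /\ chi (tr_meet R R') =1 chi R'.
Proof.
move=> TR TR' chiRR'.
have chi_meet : chi (tr_meet R R') =1 chi R.
  move=> x; have [Rcx leastc] := chi_spec TR x.
  have [R'cx _] := chi_spec TR' x.
  apply: chi_eq; split; first by rewrite /tr_meet Rcx chiRR' R'cx.
  by move=> z /andP[Rzx _]; apply: leastc.
by split=> // x; rewrite chi_meet chiRR'.
Qed.
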